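(* Let $g\in\mathcal D$, let $Y_1,Y_2$ be i.i.d. with density $g$, let $k\in\mathbb N$ and define $h:[0,1)^2\to\mathbb R$ by $$h(y_1,y_2):=\sum_{j\in\mathbb Z:|j|\in[k]}(e_j(-y_1)-g_j)(e_j(y_2)-\overline{g_j}).$$ Then $h$ is real-valued, bounded, symmetric and satisfies $\mathbb E[h(Y_1,y_2)]=0$ for all $y_2\in[0,1)$. Moreover, with $\mathsf A:=8k$, $\mathsf B:=3\|g_\bullet\|_{\ell^2}(2k)^{3/4}$, $\mathsf C:=2\|g_\bullet\|_{\ell^2}(2k)^{1/2}$ and $\mathsf D:=\mathsf C$, one has $\sup_{y_1,y_2}|h(y_1,y_2)|\le\mathsf A$, $\sup_{y_2}\mathbb E h^2(Y_1,y_2)\le\mathsf B^2$, $\mathbb E h^2(Y_1,Y_2)\le\mathsf C^2$ and $\sup\{\mathbb E[h(Y_1,Y_2)\zeta(Y_1)\xi(Y_2)]:\mathbb E\zeta^2(Y_1)\le1,\mathbb E\xi^2(Y_2)\le1\}\le\mathsf D$. If in addition $L^2(g)=L^2_{\mathbb R}$, then the last inequality also holds with $\mathsf D:=4\|g_\bullet\|_{\ell^1}$.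
   Context: $L^2:=L^2([0,1))$ complex-valued square-integrable functions with $\langle h_1,h_2\rangle=\int_0^1h_1\overline{h_2}$. $e_j(x):=\exp(-\mathrm i2\pi jx)$, $h_j:=\langle h,e_j\rangle$ for $j\in\mathbb Z$; $\|h_\bullet\|_{\ell^p}:=(\sum_{j\in\mathbb Z}|h_j|^p)^{1/p}$. $\mathcal D$ is the set of real-valued probability densities on $[0,1)$ in $L^2$. $[k]:=\{1,\dots,k\}$. For a density $g$, $L^2(g)$ is the set of real-valued Borel functions $u$ on $[0,1)$ with $\int_0^1u^2g<\infty$, and $L^2_{\mathbb R}:=L^2(\mathbb 1_{[0,1)})$. The suprema over $\zeta,\xi$ range over real Borel functions. *)

From HB Require Import structures.
From mathcomp Require Import all_boot all_order all_algebra.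
From mathcomp Require Import all_classical all_reals all_analysis.
From mathcomp Require Import complex.
Set Implicit Arguments. Unset Strict Implicit. Unset Printing Implicit Defensive.
Import Order.TTheory GRing.Theory Num.Theory.
Import numFieldNormedType.Exports.
Local Open Scope classical_set_scope.
Local Open Scope ring_scope.
Local Open Scope complex_scope.

Section Defs.
Variable R : realType.
Local Notation mu := (@lebesgue_measure R).

Definition I01 : set R := `[0%R, 1%R[.

Definition is_density_L2 (g : R -> R) : Prop :=
  [/\ measurable_fun I01 g,
      (forall x, I01 x -> 0 <= g x),
      (\int[mu]_(x in I01) (g x)%:E = 1)%E &
      (\int[mu]_(x in I01) ((g x) ^+ 2)%:E < +oo)%E].

(** e_j(x) = exp(-i 2 pi j x), written via Euler's formula *)
Definition e_ (j : int) (x : R) : R[i] :=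
  (cos (2 * pi * j%:~R * x)) -i* (sin (2 * pi * j%:~R * x)).

(** Fourier coefficient h_j = <h, e_j> = int_0^1 h(x) conj(e_j(x)) dx,
    for real-valued h (real and imaginary parts integrated separately) *)
Definition fcoef (h : R -> R) (j : int) : R[i] :=
  (Rintegral mu I01 (fun x => h x * cos (2 * pi * j%:~R * x)))
  +i* (Rintegral mu I01 (fun x => h x * sin (2 * pi * j%:~R * x))).

Definition lp_norm (p : R) (h : R -> R) : \bar R :=
  (poweR (\esum_(j in [set: int]) ((complex.Re `|fcoef h j|) `^ p)%:E) p^-1)%E.

Definition hker (g : R -> R) (k : nat) (y1 y2 : R) : R[i] :=
  \sum_(j <- [seq j <- [seq (n%:Z - k%:Z)%R | n <- iota 0 (2 * k).+1]
                    | (1 <= `|j|%N <= k)%N])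
    (e_ j (- y1) - fcoef g j) * (e_ j y2 - (fcoef g j)^*).

Definition expect1 (g : R -> R) (f : R -> R) : \bar R :=
  (\int[mu]_(x in I01) (f x * g x)%:E)%E.

(** expectation of f(Y1,Y2) for Y1, Y2 i.i.d. with density g on [0,1)
    (joint density g(y1) g(y2) w.r.t. the product Lebesgue measure) *)
Definition expect2 (g : R -> R) (f : R -> R -> R) : \bar R :=
  (\int[(mu \x mu)%E]_(z in I01 `*` I01) (f z.1 z.2 * g z.1 * g z.2)%:E)%E.

Definition L2w (g : R -> R) : set (R -> R) :=
  [set u : R -> R | measurable_fun I01 u /\ (expect1 g (fun x => (u x ^+ 2)%R) < +oo)%E].

Definition L2R : set (R -> R) := L2w (fun _ => 1).

End Defs.

Arguments I01 {R}.
Arguments L2R {R}.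

From HB Require Import structures.
From mathcomp Require Import all_boot all_order all_algebra.
From mathcomp Require Import all_classical all_reals all_analysis.
From mathcomp Require Import complex measurable_realfun.
From mathcomp Require Import ring lra zify.
Set Implicit Arguments.
Unset Strict Implicit.
Unset Printing Implicit Defensive.
Import Order.TTheory GRing.Theory Num.Theory.
Import numFieldNormedType.Exports.
Local Open Scope classical_set_scope.
Local Open Scope ring_scope.
Local Open Scope complex_scope.

(* Writing [e_j(y) - g_j] in real coordinates, [h(y1, y2)] is the finite sum
   [sum_p phi_p(y1) phi_p(y2)] over the centred functions
   [phi_(j,c) = cos(2 pi j .) - E cos(2 pi j Y)] and [phi_(j,s) = sin(2 pi j .) - E sin(2 pi j Y)],
   [1 <= |j| <= k]; the imaginary parts cancel under [j |-> -j].  Hence every moment in the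
   statement is a finite quadratic expression in the covariance matrix [Gamma_pq = E phi_p phi_q],
   and the product-to-sum formulas express [Gamma] through the Fourier coefficients [g_m],
   [|m| <= 2k].  The bounds then follow from Cauchy-Schwarz: [sum Gamma_pq^2 <= 8k sum |g_m|^2]
   gives [C]; for [zeta, xi] in the unit ball of [L^2(g)] the coordinates [a_p = E zeta phi_p]
   satisfy the Bessel inequality [(sum a_p^2)^2 <= a^T Gamma a], which gives [D]; and a Schur
   test on the moment matrix gives [a^T Gamma a <= 2 sum |g_m| sum a_p^2], hence [4 ||g||_1]. *)

Section RealInequalities.
Variable R : realFieldType.
Implicit Types a b c x y : R.

Lemma discriminant_le a b c : 0 <= a ->
  (forall t, 0 <= c - 2 * t * b + t ^+ 2 * a) -> b ^+ 2 <= c * a.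
Proof.
move=> a0 H; have [a00|an0] := eqVneq a 0.
  subst a; have [->|bn0] := eqVneq b 0; first by rewrite expr0n mulr0.
  have := H ((c + 1) / (2 * b)).
  have -> : c - 2 * ((c + 1) / (2 * b)) * b + ((c + 1) / (2 * b)) ^+ 2 * 0 = -1.
    by field.
  by rewrite oppr_ge0 ler10.
have := H (b / a).
have -> : c - 2 * (b / a) * b + (b / a) ^+ 2 * a = (c * a - b ^+ 2) / a by field.
by rewrite pmulr_lge0 ?invr_gt0 ?lt_def ?an0 // subr_ge0.
Qed.

Lemma le_sqr_le x y : 0 <= y -> x ^+ 2 <= y ^+ 2 -> x <= y.
Proof.
move=> y0 h; have [x0|x0] := lerP x 0; first exact: le_trans x0 y0.
by rewrite -(ler_pXn2r (n := 2)) // ?nnegrE // ltW.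
Qed.

Lemma cauchy_schwarz_seq (I : Type) (s : seq I) (u v : I -> R) :
  (\sum_(i <- s) u i * v i) ^+ 2 <= (\sum_(i <- s) v i ^+ 2) * (\sum_(i <- s) u i ^+ 2).
Proof.
apply: discriminant_le => [|t]; first by apply: sumr_ge0 => i _; exact: sqr_ge0.
have -> : \sum_(i <- s) v i ^+ 2 - 2 * t * (\sum_(i <- s) u i * v i) +
    t ^+ 2 * (\sum_(i <- s) u i ^+ 2) = \sum_(i <- s) (v i - t * u i) ^+ 2.
  rewrite !mulr_sumr -sumrN -!big_split /=.
  by apply: eq_bigr => i _; ring.
by apply: sumr_ge0 => i _; exact: sqr_ge0.
Qed.

Lemma sumr_const_seq (I : Type) (s : seq I) c : \sum_(i <- s) c = (size s)%:R * c.
Proof. by rewrite big_const_seq count_predT iter_addr_0 mulr_natl. Qed.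

Lemma sqr_sum_le_size (I : Type) (s : seq I) (u : I -> R) :
  (\sum_(i <- s) u i) ^+ 2 <= (size s)%:R * \sum_(i <- s) u i ^+ 2.
Proof.
have := cauchy_schwarz_seq s u (fun=> 1).
by rewrite (eq_bigr _ (fun i _ => mulr1 _)) (eq_bigr (fun=> 1) (fun i _ => expr1n _ _))
  sumr_const_seq mulr1.
Qed.

Lemma cauchy_schwarz4 (a1 a2 a3 a4 b1 b2 b3 b4 : R) :
  (a1 * b1 + a2 * b2 + a3 * b3 + a4 * b4) ^+ 2 <=
  (b1 ^+ 2 + b2 ^+ 2 + b3 ^+ 2 + b4 ^+ 2) * (a1 ^+ 2 + a2 ^+ 2 + a3 ^+ 2 + a4 ^+ 2).
Proof.
have := cauchy_schwarz_seq [:: (a1, b1); (a2, b2); (a3, b3); (a4, b4)] fst snd.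
by rewrite !big_cons !big_nil /= !addr0 !addrA.
Qed.

Lemma sum_le_subseq (I : eqType) (s t : seq I) (F : I -> R) :
  uniq s -> uniq t -> {subset s <= t} -> (forall i, 0 <= F i) ->
  \sum_(i <- s) F i <= \sum_(i <- t) F i.
Proof.
move=> us ut st F0.
rewrite [X in _ <= X](bigID (mem s)) /= -[X in _ <= X + _]big_filter.
have -> : \sum_(i <- [seq i <- t | i \in s]) F i = \sum_(i <- s) F i.
  apply/perm_big/uniq_perm; [exact: filter_uniq|exact: us|].
  by move=> x; rewrite mem_filter; apply/andP/idP => [[]//|xs]; split => //; exact: st.
by rewrite lerDl; apply: sumr_ge0 => i _.
Qed.

Lemma ler_norm_sqr_add1 x : `|x| <= x ^+ 2 + 1.
Proof.
have [x1|x1] := lerP `|x| 1; first by apply: le_trans x1 _; rewrite lerDr sqr_ge0.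
rewrite -real_normK ?num_real //; apply: ler_wpDr => //.
by rewrite expr2 ler_peMl // ltW.
Qed.

Lemma mul_le_of_sqr_le x y c : 0 <= x -> 0 <= y -> x ^+ 2 <= c -> y ^+ 2 <= c -> x * y <= c.
Proof.
move=> x0 y0 xc yc; have c0 : 0 <= c := le_trans (sqr_ge0 x) xc.
by apply: le_sqr_le => //; rewrite exprMn expr2 ler_pM ?sqr_ge0.
Qed.

Lemma schur_test (I : eqType) (s : seq I) (W : I -> I -> R) (P : I -> R) c :
  (forall i j, W i j = W j i) -> (forall i, 0 <= P i) ->
  (forall i, i \in s -> \sum_(j <- s) W i j <= c) ->
  \sum_(i <- s) \sum_(j <- s) W i j * (P i + P j) <= 2 * c * \sum_(i <- s) P i.
Proof.
move=> Wsym P0 rows.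
have -> : \sum_(i <- s) \sum_(j <- s) W i j * (P i + P j) =
    \sum_(i <- s) \sum_(j <- s) W i j * P i + \sum_(i <- s) \sum_(j <- s) W i j * P j.
  rewrite -big_split; apply: eq_bigr => i _.
  by rewrite -big_split; apply: eq_bigr => j _; rewrite mulrDr.
have -> : \sum_(i <- s) \sum_(j <- s) W i j * P j = \sum_(i <- s) \sum_(j <- s) W i j * P i.
  by rewrite exchange_big; apply: eq_bigr => i _; apply: eq_bigr => j _; rewrite Wsym.
have : \sum_(i <- s) \sum_(j <- s) W i j * P i <= c * \sum_(i <- s) P i.
  rewrite mulr_sumr big_seq [X in _ <= X]big_seq; apply: ler_sum => i si.
  by rewrite -mulr_suml mulrC [c * _]mulrC; apply: ler_wpM2l; [exact: P0|exact: rows].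
lra.
Qed.

End RealInequalities.

Section ProductIntegral.
Context d1 d2 (T1 : measurableType d1) (T2 : measurableType d2) (R : realType).
Variables (m1 : {sigma_finite_measure set T1 -> \bar R})
          (m2 : {sigma_finite_measure set T2 -> \bar R}).
Variables (a : T1 -> R) (b : T2 -> R).
Hypotheses (ma : measurable_fun setT a) (mb : measurable_fun setT b).
Hypotheses (ia : m1.-integrable setT (EFin \o a)) (ib : m2.-integrable setT (EFin \o b)).

Lemma integrable_prod_mul :
  (m1 \x m2)%E.-integrable setT (fun z => (a z.1 * b z.2)%:E).
Proof.
have mab : measurable_fun setT (fun z : T1 * T2 => (a z.1 * b z.2)%:E).
  apply/measurable_EFinP; apply: measurable_funM.
    exact: measurableT_comp ma measurable_fst.
  exact: measurableT_comp mb measurable_snd.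
apply/(integrable12ltyP m1 m2 mab).
have ma' : measurable_fun setT (fun x => (`|a x|)%:E).
  by apply/measurable_EFinP; exact: measurableT_comp.
have mb' : measurable_fun setT (fun y => (`|b y|)%:E).
  by apply/measurable_EFinP; exact: measurableT_comp.
have -> : (fun x => \int[m2]_y `|(a (x, y).1 * b (x, y).2)%:E|)%E =
          (fun x => (`|a x|)%:E * \int[m2]_y (`|b y|)%:E)%E.
  apply: funext => x /=; rewrite -ge0_integralZl_EFin //.
  by apply: eq_integral => y _; rewrite /= normrM.
rewrite ge0_integralZr //; last exact: integral_ge0.
apply: lte_mul_pinfty; first exact: integral_ge0.
  by move/integrableP: ia => [_]; rewrite ge0_fin_numE ?integral_ge0.
by move/integrableP: ib => [_].
Qed.

Lemma integral_prod_mul :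
  (\int[(m1 \x m2)%E]_z (a z.1 * b z.2)%:E =
    \int[m1]_x (a x)%:E * \int[m2]_y (b y)%:E)%E.
Proof.
rewrite -(integral12_prod_meas1 integrable_prod_mul) /fubini_F /=.
have fb := integrable_fin_num measurableT ib.
have -> : (fun x => \int[m2]_y (a x * b y)%:E)%E =
          (fun x => (a x)%:E * \int[m2]_y (b y)%:E)%E.
  by apply: funext => x; rewrite -integralZl //; apply: eq_integral => y _.
by rewrite -(fineK fb) integralZr.
Qed.

End ProductIntegral.

Section Expectation.
Variable R : realType.
Local Notation mu := (@lebesgue_measure R).
Implicit Types f u v : R -> R.

Definition bounded01 f : Prop :=
  measurable_fun I01 f /\ exists M : R, forall x, I01 x -> `|f x| <= M.

Lemma measurable_I01 : measurable (I01 : set (measurableTypeR R)).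
Proof. exact: measurable_itv. Qed.
#[local] Hint Resolve measurable_I01 : core.

Lemma bounded01_cst c : bounded01 (fun=> c).
Proof. by split; [exact: measurable_cst|exists `|c|]. Qed.

Lemma bounded01D u v : bounded01 u -> bounded01 v -> bounded01 (u \+ v).
Proof.
move=> [mu_ [M hM]] [mv [N hN]]; split; first exact: measurable_funD.
exists (M + N) => x Ix; apply: le_trans (ler_normD _ _) _.
by apply: lerD; [exact: hM|exact: hN].
Qed.

Lemma bounded01M u v : bounded01 u -> bounded01 v -> bounded01 (u \* v).
Proof.
move=> [mu_ [M hM]] [mv [N hN]]; split; first exact: measurable_funM.
by exists (M * N) => x Ix; rewrite normrM ler_pM ?hM ?hN.
Qed.

Lemma bounded01Z c u : bounded01 u -> bounded01 (fun x => c * u x).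
Proof. exact/bounded01M/bounded01_cst. Qed.

Lemma bounded01B u v : bounded01 u -> bounded01 v -> bounded01 (u \- v).
Proof.
move=> bu bv; have := bounded01D bu (bounded01Z (-1) bv).
by congr bounded01; apply: funext => x /=; rewrite mulN1r.
Qed.

Lemma bounded01_sum (I : Type) (s : seq I) (F : I -> R -> R) :
  (forall i, bounded01 (F i)) -> bounded01 (fun x => \sum_(i <- s) F i x).
Proof.
move=> bF; elim: s => [|i s IH].
  by under eq_fun do rewrite big_nil; exact: bounded01_cst.
by under eq_fun do rewrite big_cons; exact: bounded01D.
Qed.

Variable g : R -> R.

Definition Eg f : R := Rintegral mu I01 (fun x => f x * g x).
Definition g_integrable f : Prop := mu.-integrable I01 (EFin \o (fun x => f x * g x)).
Definition g_sq_integrable f : Prop :=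
  measurable_fun I01 f /\ g_integrable (fun x => f x ^+ 2).

Hypothesis hg : is_density_L2 g.

Lemma density_ge0 x : I01 x -> 0 <= g x.
Proof. by case: hg => _ + _ _; apply. Qed.

Lemma measurable_density : measurable_fun I01 g.
Proof. by case: hg. Qed.

Lemma integrable_density : mu.-integrable I01 (EFin \o g).
Proof.
case: hg => mg g0 g1 _; apply/integrableP; split; first exact/measurable_EFinP.
have -> : (\int[mu]_(x in I01) `|(EFin \o g) x|)%E = (\int[mu]_(x in I01) (g x)%:E)%E.
  by apply: eq_integral => x /[!inE] Ix; rewrite /= ger0_norm ?g0.
by rewrite g1 ltry.
Qed.

Lemma measurable_weighted f : measurable_fun I01 f ->
  measurable_fun I01 (EFin \o (fun x => f x * g x)).
Proof. by move=> mf; apply/measurable_EFinP; exact: measurable_funM mf measurable_density. Qed.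

Lemma g_integrable_cst c : g_integrable (fun=> c).
Proof.
apply: (eq_integrable measurable_I01 _ _ _ (integrableZl measurable_I01 c integrable_density)).
by move=> x _ /=; rewrite EFinM.
Qed.

Lemma bounded01_g_integrable f : bounded01 f -> g_integrable f.
Proof.
case=> mf [M hM].
apply: (le_integrable measurable_I01 (measurable_weighted mf) _ (g_integrable_cst M)) => x Ix.
rewrite /= lee_fin !normrM (ger0_norm (density_ge0 Ix)).
by apply: ler_wpM2r; [exact: density_ge0|exact: le_trans (hM x Ix) (ler_norm _)].
Qed.

Lemma g_integrable_sq_bounded01 f u : g_sq_integrable f -> bounded01 u ->
  g_integrable (f \* u).
Proof.
move=> [mf if2] [mu_ [M hM]].
have I0 : I01 (0 : R) by rewrite /I01 /= in_itv /= lexx ltr01.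
have M0 : 0 <= M := le_trans (normr_ge0 _) (hM 0 I0).
have iD : g_integrable (fun x => M * (f x ^+ 2 + 1)).
  apply: (eq_integrable measurable_I01 _ _ _ (integrableZl measurable_I01 M
    (integrableD measurable_I01 if2 (g_integrable_cst 1)))) => x _ /=.
  by rewrite -EFinD -EFinM; congr EFin; ring.
apply: (le_integrable measurable_I01 (measurable_weighted (measurable_funM mf mu_)) _ iD).
move=> x Ix.
rewrite /= lee_fin !normrM (ger0_norm (density_ge0 Ix)) ler_wpM2r ?density_ge0 //.
rewrite mulrC (ger0_norm M0) (ger0_norm (addr_ge0 (sqr_ge0 _) ler01)).
by apply: ler_pM => //; [exact: hM|exact: ler_norm_sqr_add1].
Qed.

Lemma g_integrableD u v : g_integrable u -> g_integrable v -> g_integrable (u \+ v).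
Proof.
move=> iu iv; apply: (eq_integrable measurable_I01 _ _ _ (integrableD measurable_I01 iu iv)).
by move=> x _ /=; rewrite mulrDl.
Qed.

Lemma g_integrableZ c f : g_integrable f -> g_integrable (fun x => c * f x).
Proof.
move=> i; apply: (eq_integrable measurable_I01 _ _ _ (integrableZl measurable_I01 c i)).
by move=> x _ /=; rewrite -EFinM mulrA.
Qed.

Lemma g_integrable_sum (I : Type) (s : seq I) (F : I -> R -> R) :
  (forall i, g_integrable (F i)) -> g_integrable (fun x => \sum_(i <- s) F i x).
Proof.
move=> iF; elim: s => [|i s IH].
  by under eq_fun do rewrite big_nil; exact: g_integrable_cst.
by under eq_fun do rewrite big_cons; exact: g_integrableD.
Qed.

Lemma EgD u v : g_integrable u -> g_integrable v -> Eg (u \+ v) = Eg u + Eg v.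
Proof.
by move=> iu iv; rewrite /Eg -RintegralD //; apply: eq_Rintegral => x _; rewrite mulrDl.
Qed.

Lemma EgZ c f : g_integrable f -> Eg (fun x => c * f x) = c * Eg f.
Proof.
by move=> i; rewrite /Eg -RintegralZl //; apply: eq_Rintegral => x _; rewrite mulrA.
Qed.

Lemma Eg_cst c : Eg (fun=> c) = c.
Proof.
case: hg => _ _ g1 _.
have -> : Eg (fun=> c) = c * Rintegral mu I01 g.
  by rewrite /Eg -RintegralZl //; exact: integrable_density.
by rewrite /Rintegral g1 mulr1.
Qed.

Lemma Eg_sum (I : Type) (s : seq I) (F : I -> R -> R) :
  (forall i, g_integrable (F i)) ->
  Eg (fun x => \sum_(i <- s) F i x) = \sum_(i <- s) Eg (F i).
Proof.
move=> iF; elim: s => [|i s IH].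
  by under eq_fun do rewrite big_nil; rewrite big_nil Eg_cst.
under eq_fun do rewrite big_cons.
by rewrite (EgD (iF i) (g_integrable_sum _ iF)) big_cons IH.
Qed.

Lemma Eg_ge0 f : (forall x, I01 x -> 0 <= f x) -> 0 <= Eg f.
Proof.
by move=> f0; apply: Rintegral_ge0 => x Ix; rewrite mulr_ge0 ?f0 ?density_ge0.
Qed.

Lemma expect1_Eg f : g_integrable f -> expect1 g f = (Eg f)%:E.
Proof. by move=> i; rewrite /Eg /Rintegral fineK //; exact: integrable_fin_num. Qed.

Lemma Eg_cauchy_schwarz f u : g_sq_integrable f -> bounded01 u ->
  Eg (f \* u) ^+ 2 <= Eg (fun x => f x ^+ 2) * Eg (fun x => u x ^+ 2).
Proof.
move=> hf hu; have [_ if2] := hf.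
have ifu := g_integrable_sq_bounded01 hf hu.
have iu2 : g_integrable (fun x => u x ^+ 2).
  by apply/bounded01_g_integrable; under eq_fun do rewrite expr2; exact: bounded01M.
apply: discriminant_le => [|t]; first by apply: Eg_ge0 => x _; exact: sqr_ge0.
have -> : Eg (fun x => f x ^+ 2) - 2 * t * Eg (f \* u) + t ^+ 2 * Eg (fun x => u x ^+ 2)
    = Eg (fun x => f x ^+ 2) + ((- 2 * t) * Eg (f \* u) + t ^+ 2 * Eg (fun x => u x ^+ 2)).
  by ring.
rewrite -!EgZ // -!EgD //; last 3 first.
- by apply: g_integrableD; exact: g_integrableZ.
- exact: g_integrableZ.
- exact: g_integrableZ.
apply: Eg_ge0 => x _ /=.
by rewrite (_ : _ + _ = (f x - t * u x) ^+ 2) ?sqr_ge0 //; ring.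
Qed.

Lemma g_sq_integrable_expect1 f : measurable_fun I01 f ->
  (expect1 g (fun x => (f x ^+ 2)%R) < +oo)%E -> g_sq_integrable f.
Proof.
move=> mf f2; split => //; apply/integrableP; split.
  by apply: measurable_weighted; under eq_fun do rewrite expr2; exact: measurable_funM.
apply: le_lt_trans f2; rewrite le_eqVlt; apply/orP; left; apply/eqP.
apply: eq_integral => x /[!inE] Ix.
by rewrite /= ger0_norm // mulr_ge0 ?sqr_ge0 ?density_ge0.
Qed.

End Expectation.
Arguments bounded01 {R}.

Section ProductExpectation.
Variable R : realType.
Local Notation mu := (@lebesgue_measure R).
Local Notation mR := (measurableTypeR R).
Variable g : R -> R.
Hypothesis hg : is_density_L2 g.
#[local] Hint Resolve measurable_I01 : core.

Let weighted f := (fun x => f x * g x) \_ I01.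

Let measurable_weighted01 f : measurable_fun (I01 : set R) f ->
  measurable_fun (setT : set mR) (weighted f).
Proof.
move=> mf; have : measurable_fun (I01 : set mR) (fun x => f x * g x).
  have : measurable_fun (I01 : set R) (fun x => f x * g x).
    exact: measurable_funM mf (measurable_density hg).
  exact.
exact/(measurable_restrictT _ _).1.
Qed.

Let integrable_weighted01 f : g_integrable g f -> mu.-integrable setT (EFin \o weighted f).
Proof. by move=> i; rewrite -restrict_EFin; apply/(integrable_mkcond _ _).1. Qed.

Let integral_weighted01 f : g_integrable g f ->
  (\int[mu]_x (weighted f x)%:E)%E = (Eg g f)%:E.
Proof.
move=> i; rewrite /Eg /Rintegral fineK; last exact: integrable_fin_num.
by rewrite integral_mkcond; apply: eq_integral => x _; rewrite restrict_EFin.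
Qed.

Let weighted_prod (F G : R -> R) (z : mR * mR) :
  ((fun z : mR * mR => (F z.1 * G z.2 * g z.1 * g z.2)%:E) \_ (I01 `*` I01)) z =
  (weighted F z.1 * weighted G z.2)%:E.
Proof.
rewrite /weighted /patch in_setX.
by case: (z.1 \in I01); case: (z.2 \in I01); rewrite /= ?mul0r ?mulr0 //; congr EFin; ring.
Qed.

Variables F G : R -> R.
Hypotheses (mF : measurable_fun I01 F) (mG : measurable_fun I01 G).
Hypotheses (iF : g_integrable g F) (iG : g_integrable g G).

Lemma integrable_expect2_mul : (mu \x mu)%E.-integrable (I01 `*` I01)
  (fun z : mR * mR => (F z.1 * G z.2 * g z.1 * g z.2)%:E).
Proof.
have mI : measurable (I01 `*` I01 : set (mR * mR)) by exact: measurableX.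
apply/(integrable_mkcond _ mI).
apply: (eq_integrable _ _ _ _ (integrable_prod_mul (measurable_weighted01 mF)
  (measurable_weighted01 mG) (integrable_weighted01 iF) (integrable_weighted01 iG))) => //.
Qed.

Lemma expect2_mul : expect2 g (fun y1 y2 => F y1 * G y2) = (Eg g F * Eg g G)%:E.
Proof.
rewrite /expect2 integral_mkcond.
under eq_integral do rewrite weighted_prod.
by rewrite (integral_prod_mul (measurable_weighted01 mF) (measurable_weighted01 mG)
  (integrable_weighted01 iF) (integrable_weighted01 iG)) !integral_weighted01.
Qed.

End ProductExpectation.

Lemma expect2_sum (R : realType) (g : R -> R) : is_density_L2 g ->
  forall (I : Type) (s : seq I) (F G : I -> R -> R),
  (forall i, measurable_fun I01 (F i)) -> (forall i, measurable_fun I01 (G i)) ->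
  (forall i, g_integrable g (F i)) -> (forall i, g_integrable g (G i)) ->
  expect2 g (fun y1 y2 => \sum_(i <- s) F i y1 * G i y2) =
  (\sum_(i <- s) Eg g (F i) * Eg g (G i))%:E.
Proof.
move=> hg I s F G mF mG iF iG; rewrite /expect2.
under eq_integral do rewrite big_distrl big_distrl /= -sumEFin.
rewrite integral_sum //; last by move=> i; exact: integrable_expect2_mul.
- by rewrite -sumEFin; apply: eq_bigr => i _; rewrite -(expect2_mul hg).
- by apply: measurableX; exact: measurable_I01.
Qed.

Section Trigonometric.
Variable R : realType.
Variable g : R -> R.
Hypothesis hg : is_density_L2 g.
Implicit Types (p q : int * bool) (j l m : int).

(* [(j, true)] indexes x |-> cos(2 pi j x) and [(j, false)] indexes x |-> sin(2 pi j x). *)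
Definition trig p (x : R) : R :=
  if p.2 then cos (2 * pi * p.1%:~R * x) else sin (2 * pi * p.1%:~R * x).

Definition gcoef p : R := Eg g (trig p).
Local Notation gcos m := (gcoef (m, true)).
Local Notation gsin m := (gcoef (m, false)).

Definition ctrig p (x : R) : R := trig p x - gcoef p.

(* [Eg g (trig p \* trig q)], written with the product-to-sum formulas (see [Eg_trigM]). *)
Definition trig_moment p q : R :=
  match p.2, q.2 with
  | true, true => (gcos (p.1 - q.1) + gcos (p.1 + q.1)) / 2
  | false, false => (gcos (p.1 - q.1) - gcos (p.1 + q.1)) / 2
  | true, false => (gsin (p.1 + q.1) - gsin (p.1 - q.1)) / 2
  | false, true => (gsin (p.1 - q.1) + gsin (p.1 + q.1)) / 2
  end.

Definition trig_cov p q : R := trig_moment p q - gcoef p * gcoef q.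

Lemma bounded01_trig p : bounded01 (trig p).
Proof.
have mlin c : measurable_fun setT (fun x : R => c * x) by exact: measurable_funM.
rewrite /trig; case: p.2; split.
- apply: measurable_funS (@subsetT _ I01) _ => //.
  exact: measurableT_comp (continuous_measurable_fun (@continuous_cos R)) (mlin _).
- by exists 1 => x _; exact: cos_max.
- apply: measurable_funS (@subsetT _ I01) _ => //.
  exact: measurableT_comp (continuous_measurable_fun (@continuous_sin R)) (mlin _).
- by exists 1 => x _; exact: sin_max.
Qed.

Lemma bounded01_ctrig p : bounded01 (ctrig p).
Proof. exact: bounded01B (bounded01_trig p) (bounded01_cst _). Qed.

Let g_integrable_trig p : g_integrable g (trig p).
Proof. exact/(bounded01_g_integrable hg)/bounded01_trig. Qed.

Lemma Eg_ctrig p : Eg g (ctrig p) = 0.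
Proof.
rewrite (_ : ctrig p = trig p \+ (fun=> - gcoef p * 1)); last first.
  by apply: funext => x /=; rewrite /ctrig mulr1.
by rewrite EgD ?EgZ ?Eg_cst // ?mulr1 ?subrr //; exact: g_integrable_cst.
Qed.

Let half_comb a b (s : R) :
  Eg g (fun x => (trig a x + s * trig b x) / 2) = (gcoef a + s * gcoef b) / 2.
Proof.
rewrite (_ : (fun x => _) = fun x => 2^-1 * (trig a x + s * trig b x)); last first.
  by apply: funext => x; rewrite mulrC.
have itb := g_integrableZ s (g_integrable_trig b).
rewrite EgZ; last exact: g_integrableD (g_integrable_trig a) itb.
by rewrite (EgD (g_integrable_trig a) itb) EgZ // mulrC.
Qed.

Let argB j l (x : R) : 2 * pi * (j - l)%:~R * x = 2 * pi * j%:~R * x - 2 * pi * l%:~R * x.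
Proof. by rewrite intrB; ring. Qed.

Let argD j l (x : R) : 2 * pi * (j + l)%:~R * x = 2 * pi * j%:~R * x + 2 * pi * l%:~R * x.
Proof. by rewrite intrD; ring. Qed.

Lemma Eg_trigM p q : Eg g (trig p \* trig q) = trig_moment p q.
Proof.
case: p q => [j [|]] [l [|]]; rewrite /trig_moment /=.
- rewrite -[gcos (j + l)]mul1r -half_comb.
  by congr Eg; apply: funext => x; rewrite /trig /= argB argD cosB cosD; field.
- rewrite -[- gsin (j - l)]mulN1r -half_comb.
  by congr Eg; apply: funext => x; rewrite /trig /= argB argD sinB sinD; field.
- rewrite -[gsin (j + l)]mul1r -half_comb.
  by congr Eg; apply: funext => x; rewrite /trig /= argB argD sinB sinD; field.
- rewrite -[- gcos (j + l)]mulN1r -half_comb.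
  by congr Eg; apply: funext => x; rewrite /trig /= argB argD cosB cosD; field.
Qed.

Lemma Eg_ctrigM p q : Eg g (ctrig p \* ctrig q) = trig_cov p q.
Proof.
rewrite (_ : ctrig p \* ctrig q = trig p \* trig q \+ ((fun x => - gcoef q * trig p x)
    \+ ((fun x => - gcoef p * trig q x) \+ (fun=> gcoef p * gcoef q)))); last first.
  by apply: funext => x; rewrite /ctrig /=; ring.
have itt : g_integrable g (trig p \* trig q).
  exact/(bounded01_g_integrable hg)/bounded01M/bounded01_trig/bounded01_trig.
have i1 := g_integrableZ (- gcoef q) (g_integrable_trig p).
have i2 := g_integrableZ (- gcoef p) (g_integrable_trig q).
have i3 := g_integrable_cst hg (gcoef p * gcoef q).
rewrite (EgD itt (g_integrableD i1 (g_integrableD i2 i3))) (EgD i1 (g_integrableD i2 i3)).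
by rewrite (EgD i2 i3) Eg_cst // !EgZ // Eg_trigM /trig_cov /gcoef; ring.
Qed.

Section CtrigForms.
Variables (s : seq (int * bool)) (c : int * bool -> R) (C : int * bool -> int * bool -> R).

Let g_integrable_ctrig p : g_integrable g (ctrig p).
Proof. exact/(bounded01_g_integrable hg)/bounded01_ctrig. Qed.

Let g_integrable_ctrigM p q : g_integrable g (fun x => ctrig p x * ctrig q x).
Proof. exact/(bounded01_g_integrable hg)/bounded01M/bounded01_ctrig/bounded01_ctrig. Qed.

Lemma g_integrable_ctrig_lin : g_integrable g (fun x => \sum_(p <- s) c p * ctrig p x).
Proof. by apply: (g_integrable_sum hg) => p; exact/g_integrableZ/g_integrable_ctrig. Qed.

Lemma Eg_ctrig_lin : Eg g (fun x => \sum_(p <- s) c p * ctrig p x) = 0.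
Proof.
rewrite (Eg_sum hg) => [|p]; last exact/g_integrableZ/g_integrable_ctrig.
by rewrite big1 // => p _; rewrite EgZ ?Eg_ctrig ?mulr0.
Qed.

Lemma g_integrable_ctrig_quad :
  g_integrable g (fun x => \sum_(p <- s) \sum_(q <- s) C p q * (ctrig p x * ctrig q x)).
Proof. by do 2 apply: (g_integrable_sum hg) => ?; exact/g_integrableZ/g_integrable_ctrigM. Qed.

Lemma Eg_ctrig_quad : Eg g (fun x => \sum_(p <- s) \sum_(q <- s) C p q * (ctrig p x * ctrig q x)) =
  \sum_(p <- s) \sum_(q <- s) C p q * trig_cov p q.
Proof.
rewrite (Eg_sum hg) => [|p]; last first.
  by apply: (g_integrable_sum hg) => q; exact/g_integrableZ/g_integrable_ctrigM.
apply: eq_bigr => p _; rewrite (Eg_sum hg) => [|q]; last exact/g_integrableZ/g_integrable_ctrigM.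
by apply: eq_bigr => q _; rewrite EgZ ?Eg_ctrigM.
Qed.

End CtrigForms.

Definition coef_sqnorm m : R := gcos m ^+ 2 + gsin m ^+ 2.
Definition coef_norm m : R := Num.sqrt (coef_sqnorm m).

Lemma coef_sqnorm_ge0 m : 0 <= coef_sqnorm m.
Proof. by rewrite addr_ge0 ?sqr_ge0. Qed.

Lemma coef_norm_ge0 m : 0 <= coef_norm m.
Proof. exact: sqrtr_ge0. Qed.

Lemma Re_norm_fcoef m : complex.Re `|fcoef g m| = coef_norm m.
Proof.
rewrite normc_def /coef_norm /coef_sqnorm /gcoef /Eg /trig /=.
by congr (Num.sqrt (_ ^+ 2 + _ ^+ 2)); apply: eq_Rintegral => x _; rewrite mulrC.
Qed.

Lemma abs_gcos_le m : `|gcos m| <= coef_norm m.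
Proof. by rewrite -sqrtr_sqr ler_sqrt ?coef_sqnorm_ge0 // lerDl sqr_ge0. Qed.

Lemma abs_gsin_le m : `|gsin m| <= coef_norm m.
Proof. by rewrite -sqrtr_sqr ler_sqrt ?coef_sqnorm_ge0 // lerDr sqr_ge0. Qed.

Lemma sqr_Eg_le f : bounded01 f -> Eg g f ^+ 2 <= Eg g (fun x => f x ^+ 2).
Proof.
move=> bf; have one2 : g_sq_integrable g (fun=> 1).
  split; first exact: measurable_cst.
  by under eq_fun do rewrite expr1n; exact: g_integrable_cst.
have := Eg_cauchy_schwarz hg one2 bf.
rewrite (_ : _ \* f = f); last by apply: funext => x /=; rewrite mul1r.
by rewrite expr1n Eg_cst // mul1r.
Qed.

Lemma coef_sqnorm_le1 m : coef_sqnorm m <= 1.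
Proof.
have sq p : g_integrable g (fun x => trig p x ^+ 2).
  by apply/(bounded01_g_integrable hg); under eq_fun do rewrite expr2;
    exact/bounded01M/bounded01_trig/bounded01_trig.
apply: le_trans (lerD (sqr_Eg_le (bounded01_trig _)) (sqr_Eg_le (bounded01_trig _))) _.
rewrite -EgD // (_ : _ \+ _ = fun=> 1) ?Eg_cst //.
by apply: funext => x /=; rewrite /trig /= addrC sin2cos2 subrK.
Qed.

Lemma gcosN m : gcos (- m) = gcos m.
Proof.
by congr Eg; apply: funext => x; rewrite /trig /= intrN mulrN mulNr cosN.
Qed.

Lemma gsinN m : gsin (- m) = - gsin m.
Proof.
rewrite -[- gsin m]mulN1r -EgZ //; congr Eg; apply: funext => x.
by rewrite /trig /= intrN mulrN mulNr sinN mulN1r.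
Qed.

Lemma coef_normN m : coef_norm (- m) = coef_norm m.
Proof. by rewrite /coef_norm /coef_sqnorm gcosN gsinN sqrrN. Qed.

Lemma ctrig_cosN m y : ctrig (- m, true) y = ctrig (m, true) y.
Proof. by rewrite /ctrig gcosN /trig /= intrN mulrN mulNr cosN. Qed.

Lemma ctrig_sinN m y : ctrig (- m, false) y = - ctrig (m, false) y.
Proof. by rewrite /ctrig gsinN /trig /= intrN mulrN mulNr sinN opprB opprK addrC. Qed.

Lemma coef_sqnorm0 : coef_sqnorm 0 = 1.
Proof.
rewrite /coef_sqnorm /gcoef /trig /= mulr0.
rewrite (_ : (fun x => cos (0 * x)) = fun=> 1); last by apply: funext => x; rewrite mul0r cos0.
rewrite (_ : (fun x => sin (0 * x)) = fun=> 0); last by apply: funext => x; rewrite mul0r sin0.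
by rewrite !Eg_cst // expr1n expr0n addr0.
Qed.

Lemma ctrig_sqr_le4 m y : ctrig (m, true) y ^+ 2 + ctrig (m, false) y ^+ 2 <= 4.
Proof.
rewrite /ctrig /trig /=; set a := cos _; set b := sin _.
have ab1 : a ^+ 2 + b ^+ 2 = 1 by exact: cos2Dsin2.
have cs1 := coef_sqnorm_le1 m; rewrite /coef_sqnorm in cs1.
have := cauchy_schwarz4 (gcos m) (gsin m) 0 0 a b 0 0.
rewrite !mul0r !addr0 expr0n /= !addr0 ab1 mul1r => dot.
have dot1 : - 1 <= gcos m * a + gsin m * b by nra.
have -> : (a - gcos m) ^+ 2 + (b - gsin m) ^+ 2 =
  (a ^+ 2 + b ^+ 2) - 2 * (gcos m * a + gsin m * b) + (gcos m ^+ 2 + gsin m ^+ 2) by ring.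
lra.
Qed.

End Trigonometric.

Section Frequencies.

Definition int_range (m : nat) : seq int := [seq n%:Z - m%:Z | n <- iota 0 (2 * m).+1].

Lemma mem_int_range m j : (j \in int_range m) = (`|j| <= m)%N.
Proof.
apply/mapP/idP => [[n]|jm]; first by rewrite mem_iota add0n => ? ->; lia.
by exists (absz (j + m%:Z)); [rewrite mem_iota add0n|]; lia.
Qed.

Lemma uniq_int_range m : uniq (int_range m).
Proof. by rewrite map_inj_uniq ?iota_uniq // => a b /= h; lia. Qed.

Variable k : nat.

Definition freqs : seq int := [seq j <- int_range k | (1 <= `|j| <= k)%N].

Lemma mem_freqs j : (j \in freqs) = (1 <= `|j| <= k)%N.
Proof. by rewrite mem_filter mem_int_range; apply/andP/idP => [[]//|jk]; split => //; lia. Qed.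

Lemma uniq_freqs : uniq freqs.
Proof. exact/filter_uniq/uniq_int_range. Qed.

Lemma size_freqs : (size freqs <= 2 * k)%N.
Proof.
have := count_predC (fun j : int => (1 <= `|j| <= k)%N) (int_range k).
rewrite size_map size_iota -size_filter.
have : (0 < count (predC (fun j : int => (1 <= `|j| <= k)%N)) (int_range k))%N.
  by rewrite -has_count; apply/hasP; exists 0%R; rewrite ?mem_int_range.
rewrite /freqs; lia.
Qed.

Lemma perm_freqs_opp : perm_eq freqs (map -%R freqs).
Proof.
apply: uniq_perm; [exact: uniq_freqs|by rewrite map_inj_uniq ?uniq_freqs //; exact: oppr_inj|].
by move=> j; rewrite -{2}(opprK j) (mem_map oppr_inj) !mem_freqs abszN.
Qed.

Definition freq_pairs : seq (int * bool) := [seq (j, a) | j <- freqs, a <- [:: true; false]].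

Lemma big_freq_pairs (R : nmodType) (F : int * bool -> R) :
  \sum_(p <- freq_pairs) F p = \sum_(j <- freqs) (F (j, true) + F (j, false)).
Proof. by rewrite big_allpairs; apply: eq_bigr => j _; rewrite !big_cons big_nil /= addr0. Qed.

End Frequencies.

Section Kernel.
Variables (R : realType) (g : R -> R) (k : nat).
Hypothesis hg : is_density_L2 g.

Let Re_sum (I : Type) (s : seq I) (F : I -> R[i]) :
  complex.Re (\sum_(i <- s) F i) = \sum_(i <- s) complex.Re (F i).
Proof.
elim: s => [|i s IH]; rewrite ?big_nil ?big_cons // -IH.
by case: (F i) => ? ?; case: (\sum_(j <- s) F j).
Qed.

Let Im_sum (I : Type) (s : seq I) (F : I -> R[i]) :
  complex.Im (\sum_(i <- s) F i) = \sum_(i <- s) complex.Im (F i).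
Proof.
elim: s => [|i s IH]; rewrite ?big_nil ?big_cons // -IH.
by case: (F i) => ? ?; case: (\sum_(j <- s) F j).
Qed.

Lemma fcoefE m : fcoef g m = gcoef g (m, true) +i* gcoef g (m, false).
Proof. by congr (_ +i* _); apply: eq_Rintegral => x _; rewrite mulrC. Qed.

Lemma Re_hker y1 y2 : complex.Re (hker g k y1 y2) =
  \sum_(p <- freq_pairs k) ctrig g p y1 * ctrig g p y2.
Proof.
rewrite big_freq_pairs Re_sum; apply: eq_bigr => j _.
rewrite fcoefE /e_ /ctrig /trig /= !mulrN cosN sinN; ring.
Qed.

Lemma Im_hker y1 y2 : complex.Im (hker g k y1 y2) = 0.
Proof.
pose T j := ctrig g (j, false) y1 * ctrig g (j, true) y2 -
            ctrig g (j, true) y1 * ctrig g (j, false) y2.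
have -> : complex.Im (hker g k y1 y2) = \sum_(j <- freqs k) T j.
  rewrite Im_sum; apply: eq_bigr => j _.
  rewrite fcoefE /e_ /T /ctrig /trig /= !mulrN cosN sinN; ring.
have : \sum_(j <- freqs k) T j = - \sum_(j <- freqs k) T j.
  rewrite {1}(perm_big _ (perm_freqs_opp k)) big_map -sumrN; apply: eq_bigr => j _.
  by rewrite /T !(ctrig_cosN, ctrig_sinN hg); ring.
lra.
Qed.

Lemma hker_sym y1 y2 : hker g k y1 y2 = hker g k y2 y1.
Proof.
move: (Im_hker y1 y2) (Im_hker y2 y1) (Re_hker y1 y2) (Re_hker y2 y1).
case: (hker g k y1 y2) => a b; case: (hker g k y2 y1) => c d /= -> -> -> ->.
by congr (_ +i* _); apply: eq_bigr => p _; rewrite mulrC.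
Qed.

Lemma abs_Re_hker_le y1 y2 : `|complex.Re (hker g k y1 y2)| <= 8 * k%:R.
Proof.
rewrite Re_hker big_freq_pairs; apply: le_trans (ler_norm_sum _ _ _) _.
apply: (le_trans (y := \sum_(j <- freqs k) 4)).
  apply: ler_sum => j _; apply: le_sqr_le => //; rewrite real_normK ?num_real //.
  have := cauchy_schwarz4 (ctrig g (j, true) y1) (ctrig g (j, false) y1) 0 0
    (ctrig g (j, true) y2) (ctrig g (j, false) y2) 0 0.
  rewrite !mul0r !addr0 expr0n /= !addr0 => /le_trans; apply.
  have := ctrig_sqr_le4 hg j y1; have := ctrig_sqr_le4 hg j y2.
  have := sqr_ge0 (ctrig g (j, true) y1); have := sqr_ge0 (ctrig g (j, false) y1).
  nra.
rewrite sumr_const_seq.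
have : (size (freqs k))%:R <= (2 * k)%:R :> R by rewrite ler_nat size_freqs.
rewrite natrM; lra.
Qed.

End Kernel.

Section KernelMoments.
Variables (R : realType) (g : R -> R) (k : nat).
Hypothesis hg : is_density_L2 g.
Local Notation hr y1 y2 := (complex.Re (hker g k y1 y2)).
Local Notation pairs := (freq_pairs k).
Local Notation phi := (ctrig g).

Let g_integrable_phiM p q : g_integrable g (fun x => phi p x * phi q x).
Proof. exact/(bounded01_g_integrable hg)/bounded01M/bounded01_ctrig/bounded01_ctrig. Qed.

Let measurable_phi p : measurable_fun I01 (phi p).
Proof. by case: (bounded01_ctrig g p). Qed.

Let Re_hker_lin y1 y2 : hr y1 y2 = \sum_(p <- pairs) phi p y2 * phi p y1.
Proof. by rewrite Re_hker; apply: eq_bigr => p _; rewrite mulrC. Qed.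

Let Re_hker_sqr y1 y2 : hr y1 y2 ^+ 2 =
  \sum_(p <- pairs) \sum_(q <- pairs) (phi p y2 * phi q y2) * (phi p y1 * phi q y1).
Proof.
rewrite Re_hker expr2 big_distrl; apply: eq_bigr => p _.
by rewrite big_distrr; apply: eq_bigr => q _ /=; ring.
Qed.

Lemma g_integrable_Re_hker y2 : g_integrable g (fun y1 => hr y1 y2).
Proof. by under eq_fun do rewrite Re_hker_lin; exact: g_integrable_ctrig_lin. Qed.

Lemma Eg_Re_hker y2 : Eg g (fun y1 => hr y1 y2) = 0.
Proof. by under eq_fun do rewrite Re_hker_lin; exact: Eg_ctrig_lin. Qed.

Lemma g_integrable_Re_hker_sqr y2 : g_integrable g (fun y1 => hr y1 y2 ^+ 2).
Proof. by under eq_fun do rewrite Re_hker_sqr; exact: g_integrable_ctrig_quad. Qed.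

Lemma Eg_Re_hker_sqr y2 : Eg g (fun y1 => hr y1 y2 ^+ 2) =
  \sum_(p <- pairs) \sum_(q <- pairs) (phi p y2 * phi q y2) * trig_cov g p q.
Proof. by under eq_fun do rewrite Re_hker_sqr; exact: Eg_ctrig_quad. Qed.

Lemma expect2_Re_hker_sqr : expect2 g (fun y1 y2 => hr y1 y2 ^+ 2) =
  (\sum_(p <- pairs) \sum_(q <- pairs) trig_cov g p q ^+ 2)%:E.
Proof.
pose F (r : (int * bool) * (int * bool)) := phi r.1 \* phi r.2.
have -> : (fun y1 y2 => hr y1 y2 ^+ 2) =
    (fun y1 y2 => \sum_(r <- [seq (p, q) | p <- pairs, q <- pairs]) F r y1 * F r y2).
  apply: funext => y1; apply: funext => y2; rewrite Re_hker_sqr [RHS]big_allpairs.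
  by do 2 (apply: eq_bigr => ? _); rewrite mulrC.
have mF r : measurable_fun I01 (F r) by exact: measurable_funM.
rewrite (expect2_sum hg _ mF mF (fun r => g_integrable_phiM _ _) (fun r => g_integrable_phiM _ _)).
by rewrite big_allpairs; congr EFin; do 2 (apply: eq_bigr => ? _); rewrite (Eg_ctrigM hg) expr2.
Qed.

Lemma expect2_Re_hker_mul zeta xi : g_sq_integrable g zeta -> g_sq_integrable g xi ->
  expect2 g (fun y1 y2 => hr y1 y2 * zeta y1 * xi y2) =
  (\sum_(p <- pairs) Eg g (zeta \* phi p) * Eg g (xi \* phi p))%:E.
Proof.
move=> hz hx.
have -> : (fun y1 y2 => hr y1 y2 * zeta y1 * xi y2) =
    (fun y1 y2 => \sum_(p <- pairs) (zeta \* phi p) y1 * (xi \* phi p) y2).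
  apply: funext => y1; apply: funext => y2.
  by rewrite Re_hker !big_distrl; apply: eq_bigr => p _ /=; ring.
have [[mz _] [mx _]] := (hz, hx).
rewrite (expect2_sum hg _ (fun p => measurable_funM mz (measurable_phi p))
  (fun p => measurable_funM mx (measurable_phi p))) // => p.
- exact: g_integrable_sq_bounded01 (bounded01_ctrig g p).
- exact: g_integrable_sq_bounded01 (bounded01_ctrig g p).
Qed.

End KernelMoments.

Section BlockInequalities.
Variable R : realFieldType.

Lemma sqr_cov_block_le (A B A' B' x y z w : R) :
  x ^+ 2 + y ^+ 2 <= 1 -> z ^+ 2 + w ^+ 2 <= 1 ->
  ((A + A') / 2 - x * z) ^+ 2 + ((B' - B) / 2 - x * w) ^+ 2 +
  ((B + B') / 2 - y * z) ^+ 2 + ((A - A') / 2 - y * w) ^+ 2 <=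
  (A ^+ 2 + B ^+ 2) + (A' ^+ 2 + B' ^+ 2) + (x ^+ 2 + y ^+ 2) + (z ^+ 2 + w ^+ 2).
Proof.
move=> xy1 zw1.
set p := x * z + y * w; set q := y * z - x * w.
set p' := x * z - y * w; set q' := y * z + x * w.
have -> : ((A + A') / 2 - x * z) ^+ 2 + ((B' - B) / 2 - x * w) ^+ 2 +
  ((B + B') / 2 - y * z) ^+ 2 + ((A - A') / 2 - y * w) ^+ 2 =
  ((A - p) ^+ 2 + (B - q) ^+ 2 + (A' - p') ^+ 2 + (B' - q') ^+ 2) / 2.
  by rewrite /p /q /p' /q'; field.
have pq : p ^+ 2 + q ^+ 2 + p' ^+ 2 + q' ^+ 2 = 2 * ((x ^+ 2 + y ^+ 2) * (z ^+ 2 + w ^+ 2)).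
  by rewrite /p /q /p' /q'; ring.
have sqrB (U V : R) : (U - V) ^+ 2 <= 2 * U ^+ 2 + 2 * V ^+ 2.
  by have := sqr_ge0 (U + V); lra.
have xy0 : 0 <= x ^+ 2 + y ^+ 2 by rewrite addr_ge0 ?sqr_ge0.
have zw0 : 0 <= z ^+ 2 + w ^+ 2 by rewrite addr_ge0 ?sqr_ge0.
have : 2 * ((x ^+ 2 + y ^+ 2) * (z ^+ 2 + w ^+ 2)) <= (x ^+ 2 + y ^+ 2) + (z ^+ 2 + w ^+ 2).
  by nra.
have := sqrB A p; have := sqrB B q; have := sqrB A' p'; have := sqrB B' q'.
lra.
Qed.

Lemma abs_dot2_le (p q r s : R) : `|p * r + q * s| <= (p ^+ 2 + q ^+ 2 + (r ^+ 2 + s ^+ 2)) / 2.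
Proof.
apply/ler_normlP; split.
  by have := sqr_ge0 (p + r); have := sqr_ge0 (q + s); lra.
by have := sqr_ge0 (p - r); have := sqr_ge0 (q - s); lra.
Qed.

Lemma moment_block_le (A B A' B' N N' p q r s : R) :
  `|A| <= N -> `|B| <= N -> `|A'| <= N' -> `|B'| <= N' ->
  p * r * ((A + A') / 2) + p * s * ((B' - B) / 2) + q * r * ((B + B') / 2) +
  q * s * ((A - A') / 2) <= (N + N') / 2 * ((p ^+ 2 + q ^+ 2) + (r ^+ 2 + s ^+ 2)).
Proof.
move=> hA hB hA' hB'.
set P := (p ^+ 2 + q ^+ 2) + (r ^+ 2 + s ^+ 2).
have mul_le (C M x E : R) : `|C| <= M -> `|x| <= E -> C * x <= M * E.
  move=> hC hx; apply: le_trans (ler_norm _) _; rewrite normrM.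
  by apply: ler_pM => //; exact: normr_ge0.
have h1 := abs_dot2_le p q r s.
have h2 : `|q * r - p * s| <= P / 2.
  by have := abs_dot2_le q (- p) r s; rewrite mulNr sqrrN /P; congr (_ <= _ / 2); ring.
have h3 : `|p * r - q * s| <= P / 2.
  by have := abs_dot2_le p (- q) r s; rewrite mulNr sqrrN /P; congr (_ <= _ / 2); ring.
have h4 : `|p * s + q * r| <= P / 2.
  by have := abs_dot2_le p q s r; rewrite /P; congr (_ <= _ / 2); ring.
have := mul_le _ _ _ _ hA h1; have := mul_le _ _ _ _ hB h2.
have := mul_le _ _ _ _ hA' h3; have := mul_le _ _ _ _ hB' h4.
rewrite -/P; lra.
Qed.

End BlockInequalities.

Section CovarianceBounds.
Variables (R : realType) (g : R -> R) (k : nat).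
Hypothesis hg : is_density_L2 g.
Local Notation pairs := (freq_pairs k).
Local Notation cov := (trig_cov g).
Local Notation N2 := (coef_sqnorm g).
Local Notation phi := (ctrig g).

Definition nfreqs : R := (size (freqs k))%:R.
Definition coef_sqsum : R := \sum_(m <- int_range (2 * k)) coef_sqnorm g m.
Definition coef_abssum : R := \sum_(m <- int_range (2 * k)) coef_norm g m.
Definition cov_sqsum : R := \sum_(p <- pairs) \sum_(q <- pairs) cov p q ^+ 2.

Lemma nfreqs_ge0 : 0 <= nfreqs. Proof. exact: ler0n. Qed.

Lemma nfreqs_le : nfreqs <= 2 * k%:R.
Proof. by rewrite /nfreqs -natrM ler_nat size_freqs. Qed.

Lemma coef_sqsum_ge0 : 0 <= coef_sqsum.
Proof. by apply: sumr_ge0 => m _; exact: coef_sqnorm_ge0. Qed.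

Lemma coef_abssum_ge0 : 0 <= coef_abssum.
Proof. by apply: sumr_ge0 => m _; exact: coef_norm_ge0. Qed.

Lemma cov_sqsum_ge0 : 0 <= cov_sqsum.
Proof. by do 2 (apply: sumr_ge0 => ? _); exact: sqr_ge0. Qed.

Lemma sum_freqs_map_le (u : int -> int) (f : int -> R) : injective u ->
  (forall j, j \in freqs k -> (`|u j| <= 2 * k)%N) -> (forall m, 0 <= f m) ->
  \sum_(j <- freqs k) f (u j) <= \sum_(m <- int_range (2 * k)) f m.
Proof.
move=> iu uk f0; rewrite -(big_map u predT f).
apply: sum_le_subseq => //; [by rewrite map_inj_uniq ?uniq_freqs|exact: uniq_int_range|].
by move=> _ /mapP [j jk ->]; rewrite mem_int_range; exact: uk.
Qed.

Lemma big_freq_pairs2 (F : int * bool -> int * bool -> R) :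
  \sum_(p <- pairs) \sum_(q <- pairs) F p q = \sum_(j <- freqs k) \sum_(l <- freqs k)
   (F (j, true) (l, true) + F (j, true) (l, false) +
    F (j, false) (l, true) + F (j, false) (l, false)).
Proof.
rewrite big_freq_pairs; apply: eq_bigr => j _; rewrite !big_freq_pairs -big_split /=.
by apply: eq_bigr => l _; ring.
Qed.

Definition cov_block (j l : int) : R := cov (j, true) (l, true) ^+ 2 +
  cov (j, true) (l, false) ^+ 2 + cov (j, false) (l, true) ^+ 2 + cov (j, false) (l, false) ^+ 2.

Lemma cov_block_ge0 j l : 0 <= cov_block j l.
Proof. by rewrite !addr_ge0 ?sqr_ge0. Qed.

Lemma cov_block_le j l : cov_block j l <= N2 (j - l) + N2 (j + l) + N2 j + N2 l.
Proof.
exact: sqr_cov_block_le (coef_sqnorm_le1 hg j) (coef_sqnorm_le1 hg l).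
Qed.

Lemma sum_cov_block_le :
  \sum_(j <- freqs k) \sum_(l <- freqs k) cov_block j l <= 4 * nfreqs * coef_sqsum.
Proof.
have N2_0 := coef_sqnorm_ge0 g.
have sumJ : \sum_(j <- freqs k) N2 j <= coef_sqsum.
  by apply: (sum_freqs_map_le (u := id)) => // j; rewrite mem_freqs; lia.
apply: (le_trans (y := \sum_(j <- freqs k) (3 * coef_sqsum + nfreqs * N2 j))).
  rewrite big_seq [X in _ <= X]big_seq; apply: ler_sum => j jk.
  apply: (le_trans (y := \sum_(l <- freqs k) (N2 (j - l) + N2 (j + l) + N2 j + N2 l))).
    by apply: ler_sum => l _; exact: cov_block_le.
  rewrite 3!big_split /= sumr_const_seq -/nfreqs.
  have sumB : \sum_(l <- freqs k) N2 (j - l) <= coef_sqsum.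
    apply: (sum_freqs_map_le (u := fun l => j - l)) => // [x y /addrI/oppr_inj //|l].
    by move: jk; rewrite !mem_freqs; lia.
  have sumD : \sum_(l <- freqs k) N2 (j + l) <= coef_sqsum.
    apply: (sum_freqs_map_le (addrI j)) => // l.
    by move: jk; rewrite !mem_freqs; lia.
  lra.
rewrite big_split /= sumr_const_seq -mulr_sumr -/nfreqs.
have := nfreqs_ge0; have := coef_sqsum_ge0; nra.
Qed.

Lemma cov_sqsum_le : cov_sqsum <= 4 * nfreqs * coef_sqsum.
Proof. by rewrite /cov_sqsum big_freq_pairs2; exact: sum_cov_block_le. Qed.

Lemma sqr_cov_diag_le y :
  (\sum_(p <- pairs) \sum_(q <- pairs) (phi p y * phi q y) * cov p q) ^+ 2
    <= 64 * nfreqs ^+ 3 * coef_sqsum.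
Proof.
rewrite big_freq_pairs2.
pose T j l := phi (j, true) y * phi (l, true) y * cov (j, true) (l, true) +
  phi (j, true) y * phi (l, false) y * cov (j, true) (l, false) +
  phi (j, false) y * phi (l, true) y * cov (j, false) (l, true) +
  phi (j, false) y * phi (l, false) y * cov (j, false) (l, false).
rewrite -/(\sum_(j <- freqs k) \sum_(l <- freqs k) T j l).
have T_le j l : T j l ^+ 2 <= 16 * cov_block j l.
  apply: le_trans (cauchy_schwarz4 _ _ _ _ _ _ _ _) _; rewrite -/(cov_block j l).
  have := cov_block_ge0 j l.
  suff : (phi (j, true) y * phi (l, true) y) ^+ 2 + (phi (j, true) y * phi (l, false) y) ^+ 2 +
    (phi (j, false) y * phi (l, true) y) ^+ 2 + (phi (j, false) y * phi (l, false) y) ^+ 2 <= 16.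
    by nra.
  rewrite !exprMn (_ : _ + _ = (phi (j, true) y ^+ 2 + phi (j, false) y ^+ 2) *
    (phi (l, true) y ^+ 2 + phi (l, false) y ^+ 2)); last by ring.
  have := ctrig_sqr_le4 hg j y; have := ctrig_sqr_le4 hg l y.
  have := sqr_ge0 (phi (j, true) y); have := sqr_ge0 (phi (j, false) y).
  have := sqr_ge0 (phi (l, true) y); have := sqr_ge0 (phi (l, false) y).
  nra.
apply: le_trans (sqr_sum_le_size _ _) _; rewrite -/nfreqs.
apply: (le_trans (y := nfreqs * \sum_(j <- freqs k) (nfreqs * \sum_(l <- freqs k) T j l ^+ 2))).
  by apply: ler_wpM2l; [exact: nfreqs_ge0|apply: ler_sum => j _; exact: sqr_sum_le_size].
rewrite -mulr_sumr mulrA.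
rewrite (_ : 64 * _ * _ = nfreqs * nfreqs * (16 * (4 * nfreqs * coef_sqsum))); last by ring.
apply: ler_wpM2l; first by rewrite mulr_ge0 ?nfreqs_ge0.
apply: le_trans (ler_wpM2l _ sum_cov_block_le) => //.
rewrite mulr_sumr; apply: ler_sum => j _; rewrite mulr_sumr; apply: ler_sum => l _.
exact: T_le.
Qed.

Implicit Types a b : int * bool -> R.

Definition sqsum a : R := \sum_(p <- pairs) a p ^+ 2.
Definition cov_form a : R := \sum_(p <- pairs) \sum_(q <- pairs) a p * a q * cov p q.
Definition moment_form a : R :=
  \sum_(p <- pairs) \sum_(q <- pairs) a p * a q * trig_moment g p q.

Lemma sqsum_ge0 a : 0 <= sqsum a.
Proof. by apply: sumr_ge0 => p _; exact: sqr_ge0. Qed.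

Lemma sqr_sum_mul_le a b : (\sum_(p <- pairs) a p * b p) ^+ 2 <= sqsum a * sqsum b.
Proof. by rewrite mulrC; exact: cauchy_schwarz_seq. Qed.

Lemma sqr_cov_form_le a : cov_form a ^+ 2 <= sqsum a ^+ 2 * cov_sqsum.
Proof.
pose ps := [seq (p, q) | p <- pairs, q <- pairs].
have flat (F : int * bool -> int * bool -> R) :
    \sum_(p <- pairs) \sum_(q <- pairs) F p q = \sum_(r <- ps) F r.1 r.2.
  by rewrite /ps [RHS]big_allpairs.
rewrite /cov_form /cov_sqsum !flat.
apply: le_trans (cauchy_schwarz_seq ps (fun r => a r.1 * a r.2) (fun r => cov r.1 r.2)) _.
rewrite mulrC ler_wpM2r //; first by apply: sumr_ge0 => r _; exact: sqr_ge0.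
rewrite -(flat (fun p q => (a p * a q) ^+ 2)) /sqsum expr2 big_distrl.
rewrite le_eqVlt; apply/orP; left; apply/eqP.
by apply: eq_bigr => p _; rewrite big_distrr; apply: eq_bigr => q _ /=; ring.
Qed.

Lemma cov_form_le_moment a : cov_form a <= moment_form a.
Proof.
have -> : cov_form a = moment_form a - (\sum_(p <- pairs) a p * gcoef g p) ^+ 2.
  rewrite /cov_form /moment_form expr2 big_distrl -sumrB; apply: eq_bigr => p _.
  by rewrite big_distrr -sumrB; apply: eq_bigr => q _; rewrite /trig_cov /=; ring.
by rewrite lerBlDr lerDl sqr_ge0.
Qed.

Lemma sum_coef_norm_shift_le j : j \in freqs k ->
  \sum_(l <- freqs k) (coef_norm g (j - l) + coef_norm g (j + l)) / 2 <= coef_abssum.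
Proof.
move=> jk; have N0 := coef_norm_ge0 g.
rewrite -mulr_suml big_split /=.
have : \sum_(l <- freqs k) coef_norm g (j - l) <= coef_abssum.
  apply: (sum_freqs_map_le (u := fun l => j - l)) => // [x y /addrI/oppr_inj //|l].
  by move: jk; rewrite !mem_freqs; lia.
have : \sum_(l <- freqs k) coef_norm g (j + l) <= coef_abssum.
  by apply: (sum_freqs_map_le (addrI j)) => // l; move: jk; rewrite !mem_freqs; lia.
lra.
Qed.

Lemma moment_form_le a : moment_form a <= 2 * coef_abssum * sqsum a.
Proof.
pose P j := a (j, true) ^+ 2 + a (j, false) ^+ 2.
pose W j l := (coef_norm g (j - l) + coef_norm g (j + l)) / 2.
have Wsym j l : W j l = W l j.
  by rewrite /W -[j - l]opprB (coef_normN hg) [j + l]addrC.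
rewrite /sqsum big_freq_pairs -/(\sum_(j <- freqs k) P j).
apply: le_trans (schur_test Wsym (fun j => addr_ge0 (sqr_ge0 _) (sqr_ge0 _))
  sum_coef_norm_shift_le).
rewrite /moment_form big_freq_pairs2; apply: ler_sum => j _; apply: ler_sum => l _.
have := moment_block_le (a (j, true)) (a (j, false)) (a (l, true)) (a (l, false))
  (abs_gcos_le g (j - l)) (abs_gsin_le g (j - l)) (abs_gcos_le g (j + l)) (abs_gsin_le g (j + l)).
by rewrite /trig_moment /W /P /=.
Qed.

Lemma sqsum_le_cov_sqsum a : sqsum a ^+ 2 <= cov_form a -> sqsum a ^+ 2 <= cov_sqsum.
Proof.
move=> hq; have := sqr_cov_form_le a; have := sqsum_ge0 a; have := cov_sqsum_ge0.
set s := sqsum a in hq *; set q := cov_form a in hq * => F0 s0 qF.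
have [->|sn0] := eqVneq s 0; first by rewrite expr0n.
have sp : 0 < s ^+ 2 by rewrite exprn_gt0 // lt_def sn0.
rewrite -(ler_pM2l sp); apply: le_trans qF; rewrite -expr2.
have q0 : 0 <= q := le_trans (sqr_ge0 _) hq.
by rewrite ler_pXn2r ?nnegrE ?sqr_ge0.
Qed.

Lemma sqsum_le_coef_abssum a : sqsum a ^+ 2 <= cov_form a -> sqsum a <= 2 * coef_abssum.
Proof.
move=> hq; have := le_trans hq (le_trans (cov_form_le_moment a) (moment_form_le a)).
have := coef_abssum_ge0; have := sqsum_ge0 a; set s := sqsum a => s0 G0.
have [->|sn0] := eqVneq s 0; first by rewrite mulr_ge0.
by rewrite expr2 ler_pM2r // lt_def sn0.
Qed.

Definition ctrig_coord (zeta : R -> R) p : R := Eg g (zeta \* phi p).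

(* Bessel's inequality for the non-orthogonal family [phi p], with Gram matrix [cov]. *)
Lemma sqsum_coord_le zeta : g_sq_integrable g zeta -> Eg g (fun x => zeta x ^+ 2) <= 1 ->
  sqsum (ctrig_coord zeta) ^+ 2 <= cov_form (ctrig_coord zeta).
Proof.
move=> hz hz1; set a := ctrig_coord zeta.
pose Psi x := \sum_(p <- pairs) a p * phi p x.
have bPsi : bounded01 Psi.
  by apply: bounded01_sum => p; apply: bounded01Z; exact: bounded01_ctrig.
have izp p : g_integrable g (zeta \* phi p).
  by have := g_integrable_sq_bounded01 hg hz (bounded01_ctrig g p); apply.
have sqsumE : sqsum a = Eg g (zeta \* Psi).
  rewrite (_ : zeta \* Psi = fun x => \sum_(p <- pairs) a p * (zeta \* phi p) x); last first.
    by apply: funext => x; rewrite /Psi /= big_distrr; apply: eq_bigr => p _ /=; ring.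
  rewrite (Eg_sum hg) => [|p]; last exact: g_integrableZ.
  by apply: eq_bigr => p _; rewrite EgZ // expr2.
have PsiE : Eg g (fun x => Psi x ^+ 2) = cov_form a.
  rewrite /cov_form -(Eg_ctrig_quad hg); congr Eg; apply: funext => x.
  rewrite /Psi expr2 big_distrl; apply: eq_bigr => p _.
  by rewrite big_distrr; apply: eq_bigr => q _ /=; ring.
rewrite sqsumE -PsiE; apply: le_trans (Eg_cauchy_schwarz hg hz bPsi) _.
have := Eg_ge0 hg (fun x _ => sqr_ge0 (Psi x)); have := Eg_ge0 hg (fun x _ => sqr_ge0 (zeta x)).
nra.
Qed.

End CovarianceBounds.

Lemma esum_ge_sum_seq (R : realType) (f : int -> R) (s : seq int) : uniq s ->
  ((\sum_(i <- s) f i)%:E <= \esum_(j in [set: int]) (f j)%:E)%E.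
Proof.
move=> us; apply: esum_ge; exists [set` s]; first by split; [exact: finite_seq|].
by rewrite -fsbig_seq // sumEFin.
Qed.

Section FourierNorms.
Variables (R : realType) (g : R -> R) (k : nat).
Hypothesis hg : is_density_L2 g.
Local Open Scope ereal_scope.

Let coef_esum2 : \bar R := \esum_(j in [set: int]) (coef_sqnorm g j)%:E.

Let coef_esum2_ge0 : 0 <= coef_esum2.
Proof. by apply: esum_ge0 => j _; rewrite lee_fin coef_sqnorm_ge0. Qed.

Lemma lp_norm2_ge0 : 0 <= lp_norm 2 g.
Proof. exact: poweR_ge0. Qed.

Lemma lp_norm2_sqr : lp_norm 2 g * lp_norm 2 g = coef_esum2.
Proof.
have -> : lp_norm 2 g = coef_esum2 `^ 2^-1.
  congr poweR; congr esum; apply: funext => j; rewrite Re_norm_fcoef; congr EFin.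
  by rewrite (@powR_mulrn _ _ 2) ?coef_norm_ge0 // sqr_sqrtr ?coef_sqnorm_ge0.
by rewrite poweR12_sqrt ?coef_esum2_ge0 // -expe2 (sqr_sqrte coef_esum2_ge0).
Qed.

Lemma lp_norm1E : lp_norm 1 g = \esum_(j in [set: int]) (coef_norm g j)%:E.
Proof.
rewrite /lp_norm invr1 poweRe1; last by apply: esum_ge0 => j _; rewrite lee_fin powR_ge0.
by congr esum; apply: funext => j; rewrite Re_norm_fcoef powRr1 ?coef_norm_ge0.
Qed.

Lemma coef_abssum_le_lp_norm1 : (coef_abssum g k)%:E <= lp_norm 1 g.
Proof. by rewrite lp_norm1E; exact: esum_ge_sum_seq (uniq_int_range _). Qed.

Lemma coef_sqsum_ge1 : (1 <= coef_sqsum g k)%R.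
Proof.
rewrite -(coef_sqnorm0 hg).
have := @sum_le_subseq _ _ [:: 0%R] (int_range (2 * k)) (coef_sqnorm g).
rewrite big_seq1; apply => //; [exact: uniq_int_range| |exact: coef_sqnorm_ge0].
by move=> x; rewrite inE => /eqP ->; rewrite mem_int_range.
Qed.

Lemma lp_norm2_cases : lp_norm 2 g = +oo \/
  exists2 l : R, lp_norm 2 g = l%:E & (0 <= l)%R /\ (coef_sqsum g k <= l * l)%R.
Proof.
have : (coef_sqsum g k)%:E <= lp_norm 2 g * lp_norm 2 g.
  by rewrite lp_norm2_sqr; exact: esum_ge_sum_seq (uniq_int_range _).
have := lp_norm2_ge0; case: (lp_norm 2 g) => [l| |] //; [|by left].
by move=> l0 Sl; right; exists l; rewrite // -lee_fin EFinM.
Qed.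

End FourierNorms.

Section Constants.
Variables (R : realType) (g : R -> R) (k : nat).
Hypothesis hg : is_density_L2 g.
Local Notation n := (nfreqs R k).
Local Notation S := (coef_sqsum g k).

Definition constB : \bar R := (3%:E * lp_norm 2 g * (powR (2 * k%:R) (3 / 4))%:E)%E.
Definition constC : \bar R := (2%:E * lp_norm 2 g * (powR (2 * k%:R) (1 / 2))%:E)%E.

Let k2_ge0 : 0 <= 2 * k%:R :> R. Proof. by rewrite mulr_ge0. Qed.

Let powR_half : powR (2 * k%:R : R) (1 / 2) ^+ 2 = 2 * k%:R.
Proof.
rewrite -(@powR_mulrn R _ 2 (powR_ge0 _ _)) -powRrM.
by rewrite (_ : 1 / 2 * 2%:R = 1) ?powRr1 ?k2_ge0 //; field.
Qed.

Let powR_34 : powR (2 * k%:R : R) (3 / 4) ^+ 4 = (2 * k%:R) ^+ 3.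
Proof.
rewrite -(@powR_mulrn R _ 4 (powR_ge0 _ _)) -powRrM.
by rewrite (_ : 3 / 4 * 4%:R = 3%:R) ?powR_mulrn ?k2_ge0 //; field.
Qed.

Let nfreqs0 : k = 0%N -> n = 0.
Proof.
move=> k0; apply/eqP; rewrite eq_le nfreqs_ge0 andbT.
by have := nfreqs_le R k; rewrite k0 mulr0.
Qed.

Let powR_gt0k (r : R) : (0 < k)%N -> 0 < powR (2 * k%:R) r.
Proof. by move=> kp; apply: powR_gt0; rewrite mulr_gt0 // ltr0n. Qed.

Let constC_ge0 : (0 <= constC)%E.
Proof. by rewrite !mule_ge0 ?lp_norm2_ge0 // lee_fin powR_ge0. Qed.

Let constB_ge0 : (0 <= constB)%E.
Proof. by rewrite !mule_ge0 ?lp_norm2_ge0 // lee_fin powR_ge0. Qed.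

Lemma le_constC_sqr (x : R) : x <= 4 * n * S -> (x%:E <= constC * constC)%E.
Proof.
move=> hx; have [k0|kp] := posnP k.
  rewrite nfreqs0 // mulr0 mul0r in hx.
  by apply: le_trans (mule_ge0 constC_ge0 constC_ge0); rewrite lee_fin.
rewrite /constC; case: (lp_norm2_cases g k) => [->|[l -> [l0 hl]]].
  by rewrite gt0_muley ?lte_fin // gt0_mulye ?lte_fin ?powR_gt0k // mulyy leey.
rewrite -!EFinM lee_fin; set p := powR _ _.
rewrite (_ : _ * _ = 4 * (l * l) * p ^+ 2); last by ring.
rewrite powR_half; apply: le_trans hx _.
have := nfreqs_le R k; have := nfreqs_ge0 R k; have := coef_sqsum_ge0 g k.
have : n * S <= 2 * k%:R * (l * l).
  by apply: ler_pM; rewrite ?nfreqs_ge0 ?coef_sqsum_ge0 ?nfreqs_le.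
nra.
Qed.

Lemma le_constC (x : R) : x ^+ 2 <= 4 * n * S -> (x%:E <= constC)%E.
Proof.
move=> hx; have [k0|kp] := posnP k.
  rewrite nfreqs0 // mulr0 mul0r in hx.
  by apply: le_trans constC_ge0; rewrite lee_fin; nra.
rewrite /constC; case: (lp_norm2_cases g k) => [->|[l -> [l0 hl]]].
  by rewrite gt0_muley ?lte_fin // gt0_mulye ?lte_fin ?powR_gt0k // leey.
rewrite -!EFinM lee_fin; set p := powR _ _.
have p0 : 0 <= p by exact: powR_ge0.
apply: le_sqr_le; first by rewrite !mulr_ge0.
rewrite (_ : (2 * l * p) ^+ 2 = 4 * (l * l) * p ^+ 2); last by ring.
rewrite powR_half; apply: le_trans hx _.
have : n * S <= 2 * k%:R * (l * l).
  by apply: ler_pM; rewrite ?nfreqs_ge0 ?coef_sqsum_ge0 ?nfreqs_le.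
nra.
Qed.

Lemma le_constB_sqr (x : R) : 0 <= x -> x ^+ 2 <= 64 * n ^+ 3 * S -> (x%:E <= constB * constB)%E.
Proof.
move=> x0 hx; have [k0|kp] := posnP k.
  rewrite nfreqs0 // expr0n /= mulr0 mul0r in hx.
  by apply: le_trans (mule_ge0 constB_ge0 constB_ge0); rewrite lee_fin; nra.
rewrite /constB; case: (lp_norm2_cases g k) => [->|[l -> [l0 hl]]].
  by rewrite gt0_muley ?lte_fin // gt0_mulye ?lte_fin ?powR_gt0k // mulyy leey.
rewrite -!EFinM lee_fin; set p := powR _ _.
have p0 : 0 <= p by exact: powR_ge0.
apply: le_sqr_le; first by rewrite !mulr_ge0.
rewrite (_ : (3 * l * p * (3 * l * p)) ^+ 2 = 81 * (l * l) ^+ 2 * p ^+ 4); last by ring.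
rewrite powR_34; apply: le_trans hx _.
have S1 := coef_sqsum_ge1 k hg.
have Sl2 : S <= (l * l) ^+ 2.
  by apply: (le_trans hl); rewrite expr2 ler_peMl ?mulr_ge0 //; exact: le_trans S1 hl.
have n3 : n ^+ 3 <= (2 * k%:R) ^+ 3 by rewrite lerXn2r ?nnegrE ?nfreqs_ge0 ?nfreqs_le ?k2_ge0.
have : n ^+ 3 * S <= (2 * k%:R) ^+ 3 * (l * l) ^+ 2.
  by apply: ler_pM => //; rewrite ?exprn_ge0 ?nfreqs_ge0 ?coef_sqsum_ge0.
have : 0 <= (2 * k%:R) ^+ 3 * (l * l) ^+ 2 by rewrite mulr_ge0 // exprn_ge0 // mulr_ge0.
lra.
Qed.

Lemma le_lp_norm1 (x : R) : x <= 2 * coef_abssum g k -> (x%:E <= 4%:E * lp_norm 1 g)%E.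
Proof.
move=> hx; apply: le_trans (lee_wpmul2l _ (coef_abssum_le_lp_norm1 g k)) => //.
by rewrite -EFinM lee_fin; have := coef_abssum_ge0 g k; lra.
Qed.

End Constants.

Section KernelBounds.
Variables (R : realType) (g : R -> R) (k : nat).
Hypothesis hg : is_density_L2 g.
Local Notation hr y1 y2 := (complex.Re (hker g k y1 y2)).
Local Notation coord := (ctrig_coord g).

Lemma expect1_Re_hker y2 : expect1 g (fun y1 => hr y1 y2) = 0%E.
Proof. by rewrite expect1_Eg ?Eg_Re_hker //; exact: g_integrable_Re_hker. Qed.

Lemma expect1_Re_hker_sqr_le y2 :
  (expect1 g (fun y1 => (hr y1 y2 ^+ 2)%R) <= constB g k * constB g k)%E.
Proof.
rewrite expect1_Eg; last exact: g_integrable_Re_hker_sqr.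
apply: le_constB_sqr => //; first by apply: Eg_ge0 => // x _; exact: sqr_ge0.
by rewrite Eg_Re_hker_sqr //; exact: sqr_cov_diag_le.
Qed.

Lemma expect2_Re_hker_sqr_le :
  (expect2 g (fun y1 y2 => (hr y1 y2 ^+ 2)%R) <= constC g k * constC g k)%E.
Proof. by rewrite expect2_Re_hker_sqr //; apply: le_constC_sqr => //; exact: cov_sqsum_le. Qed.

Variables zeta xi : R -> R.
Hypotheses (mzeta : measurable_fun I01 zeta) (mxi : measurable_fun I01 xi).
Hypotheses (zeta1 : (expect1 g (fun y => (zeta y ^+ 2)%R) <= 1)%E)
           (xi1 : (expect1 g (fun y => (xi y ^+ 2)%R) <= 1)%E).

Let unit_ball_coord (f : R -> R) :
  measurable_fun I01 f -> (expect1 g (fun y => (f y ^+ 2)%R) <= 1)%E ->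
  g_sq_integrable g f /\ sqsum k (coord f) ^+ 2 <= cov_form g k (coord f).
Proof.
move=> mf f1; have f2 := g_sq_integrable_expect1 hg mf (le_lt_trans f1 (ltry 1)).
split=> //; apply: sqsum_coord_le => //.
by move: f1; rewrite expect1_Eg ?lee_fin //; case: f2.
Qed.

Let expect2_Re_hker_mulE : expect2 g (fun y1 y2 => (hr y1 y2 * zeta y1 * xi y2)%R) =
  (\sum_(p <- freq_pairs k) coord zeta p * coord xi p)%:E.
Proof.
have [[hz _] [hx _]] := (unit_ball_coord mzeta zeta1, unit_ball_coord mxi xi1).
exact: expect2_Re_hker_mul.
Qed.

Lemma expect2_Re_hker_mul_le_C :
  (expect2 g (fun y1 y2 => (hr y1 y2 * zeta y1 * xi y2)%R) <= constC g k)%E.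
Proof.
have [[_ za] [_ xa]] := (unit_ball_coord mzeta zeta1, unit_ball_coord mxi xi1).
rewrite expect2_Re_hker_mulE; apply: le_constC => //.
apply: le_trans (sqr_sum_mul_le _ _ _) _; apply: (le_trans _ (cov_sqsum_le k hg)).
by apply: mul_le_of_sqr_le; rewrite ?sqsum_ge0 ?sqsum_le_cov_sqsum.
Qed.

Lemma expect2_Re_hker_mul_le_lp_norm1 :
  (expect2 g (fun y1 y2 => (hr y1 y2 * zeta y1 * xi y2)%R) <= 4%:E * lp_norm 1 g)%E.
Proof.
have [[_ za] [_ xa]] := (unit_ball_coord mzeta zeta1, unit_ball_coord mxi xi1).
rewrite expect2_Re_hker_mulE; apply: (le_lp_norm1 (k := k)).
apply: le_sqr_le; first by rewrite mulr_ge0 ?coef_abssum_ge0.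
apply: le_trans (sqr_sum_mul_le _ _ _) _; rewrite expr2.
by apply: ler_pM; rewrite ?sqsum_ge0 ?sqsum_le_coef_abssum.
Qed.

End KernelBounds.

Theorem corollaryA5 (R : realType) (g : R -> R) (k : nat) :
  is_density_L2 g ->
  let h : R -> R -> R[i] := hker g k in
  let hr : R -> R -> R := fun y1 y2 => complex.Re (h y1 y2) in
  let A : R := 8 * k%:R in
  let B : \bar R := (3%:E * lp_norm 2 g * (powR (2 * k%:R) (3 / 4))%:E)%E in
  let C : \bar R := (2%:E * lp_norm 2 g * (powR (2 * k%:R) (1 / 2))%:E)%E in
  let D : \bar R := C in
  (* h is real-valued *)
      (forall y1 y2, I01 y1 -> I01 y2 -> complex.Im (h y1 y2) = 0) /\
      (* h is bounded *)
      (exists M : R, forall y1 y2, I01 y1 -> I01 y2 -> `|hr y1 y2| <= M) /\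
      (* h is symmetric *)
      (forall y1 y2, I01 y1 -> I01 y2 -> h y1 y2 = h y2 y1) /\
      (* E[h(Y1, y2)] = 0 *)
      (forall y2, I01 y2 -> expect1 g (fun y1 => hr y1 y2) = 0%E) /\
      (* sup |h| <= A *)
      (forall y1 y2, I01 y1 -> I01 y2 -> `|hr y1 y2| <= A) /\
      (* sup_{y2} E h^2(Y1, y2) <= B^2 *)
      (forall y2, I01 y2 -> (expect1 g (fun y1 => (hr y1 y2 ^+ 2)%R) <= B * B)%E) /\
      (* E h^2(Y1, Y2) <= C^2 *)
      (expect2 g (fun y1 y2 => (hr y1 y2 ^+ 2)%R) <= C * C)%E /\
      (* the sup over zeta, xi is <= D *)
      (forall zeta xi : R -> R,
         measurable_fun I01 zeta -> measurable_fun I01 xi ->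
         (expect1 g (fun y => (zeta y ^+ 2)%R) <= 1)%E ->
         (expect1 g (fun y => (xi y ^+ 2)%R) <= 1)%E ->
         (expect2 g (fun y1 y2 => (hr y1 y2 * zeta y1 * xi y2)%R) <= D)%E) /\
      (* if L^2(g) = L^2_R, the same holds with D := 4 ||g_.||_{l^1} *)
      (L2w g = L2R ->
       forall zeta xi : R -> R,
         measurable_fun I01 zeta -> measurable_fun I01 xi ->
         (expect1 g (fun y => (zeta y ^+ 2)%R) <= 1)%E ->
         (expect1 g (fun y => (xi y ^+ 2)%R) <= 1)%E ->
         (expect2 g (fun y1 y2 => (hr y1 y2 * zeta y1 * xi y2)%R)
            <= 4%:E * lp_norm 1 g)%E).
Proof.
move=> hg h hr A B C D.
split; first by move=> y1 y2 _ _; exact: Im_hker.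
split; first by exists A => y1 y2 _ _; exact: abs_Re_hker_le.
split; first by move=> y1 y2 _ _; exact: hker_sym.
split; first by move=> y2 _; exact: expect1_Re_hker.
split; first by move=> y1 y2 _ _; exact: abs_Re_hker_le.
split; first by move=> y2 _; exact: expect1_Re_hker_sqr_le.
split; first exact: expect2_Re_hker_sqr_le.
split; first by move=> zeta xi *; exact: expect2_Re_hker_mul_le_C.
(* the l^1 bound holds for every density *)
by move=> _ zeta xi *; exact: expect2_Re_hker_mul_le_lp_norm1.
Qed.
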